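(* Let $q\in\mathbb{C}^\times$ be not a root of unity, $k\in\mathbb{Z}_{>0}$ and $Q,\beta\in\mathbb{C}^\times$. The polynomials $p^{\langle Q\rangle}_t(q;\beta)(x_1,\dots,x_k)$, $1\le t\le k$, are algebraically independent over $\mathbb{C}$.
   Context: For $t,k>0$, $p_t(q)(x_1,\dots,x_k)=\sum_{\lambda\vdash t,\ \ell(\lambda)\le k}q^{-\ell(\lambda)}(q-q^{-1})^{\ell(\lambda)-1}m_\lambda(x_1,\dots,x_k)$ ($\lambda$ partitions of $t$ with at most $k$ nonzero parts, $m_\lambda$ monomial symmetric polynomial). With $\tilde\beta=(q-q^{-1})^{-1}(1-\beta^{-2})$, $p^{\langle Q\rangle}_t(q;\beta)(x_1,\dots,x_k)=p_t(q)(x_1,\dots,x_k)+\tilde\beta Q^{-t}+(q-q^{-1})\sum_{z=1}^{t-1}\tilde\beta Q^{-t+z}p_z(q)(x_1,\dots,x_k)$. *)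

From HB Require Import structures.
From mathcomp Require Import all_boot all_order all_algebra.
From mathcomp Require Import Rstruct.
From mathcomp Require Import complex.
From mathcomp Require Import mpoly.
Set Implicit Arguments. Unset Strict Implicit. Unset Printing Implicit Defensive.
Import Order.TTheory GRing.Theory Num.Theory.
Local Open Scope ring_scope.

Definition C : Type := complex Rdefinitions.R.

Definition lam_of (k : nat) (a : 'X_{1..k}) : seq nat :=
  sort geq (filter (fun n => n != 0%N) [seq a i | i <- enum 'I_k]).

Definition is_partition (k t : nat) (lam : seq nat) : bool :=
  [&& sorted geq lam, all (fun n => 0 < n)%N lam, sumn lam == t
    & size lam <= k]%N.

Definition partitions (k t : nat) : seq (seq nat) :=
  [seq lam <- undup [seq lam_of (val a) | a : 'X_{1..k < t.+1}]
     | is_partition k t lam].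

Definition msym (k : nat) (lam : seq nat) : {mpoly C[k]} :=
  \sum_(a : 'X_{1..k < (sumn lam).+1} | lam_of (val a) == lam) 'X_[val a].

Definition pt (q : C) (k t : nat) : {mpoly C[k]} :=
  \sum_(lam <- partitions k t)
     ((q ^- size lam) * (q - q^-1) ^+ (size lam).-1) *: msym k lam.

Definition betat (q beta : C) : C := (q - q^-1)^-1 * (1 - beta ^- 2).

Definition pQ (q beta Q : C) (k t : nat) : {mpoly C[k]} :=
  pt q k t + (betat q beta * Q ^- t)%:MP
  + (q - q^-1) *: \sum_(1 <= z < t) (betat q beta * Q ^- (t - z)) *: pt q k z.

Definition alg_indep (n k : nat) (lq : n.-tuple {mpoly C[k]}) : Prop :=
  forall P : {mpoly C[n]}, comp_mpoly lq P = 0 -> P = 0.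

From Pilot Require Import Defs.
From HB Require Import structures.
From mathcomp Require Import all_boot all_order all_algebra.
From mathcomp Require Import Rstruct complex mpoly.

(* Put d = q - q^-1, s = 1 - q^-2 and h_t = \sum_(|a| = t) s^l(a) x^a, where l(a) is
   the number of nonzero exponents of a; then p_t(q) = d^-1 h_t for t > 0.  The identity
   \sum_j (-1)^j e_j h_(t-j) = (s - 1)^t e_t, the coefficientwise form of
   \prod_i (1 - x_i) (1 + s x_i / (1 - x_i)) = \prod_i (1 + (s - 1) x_i), gives
   h_t = ((s - 1)^t - (-1)^t) e_t + (a polynomial in e_1, ..., e_(t-1)).
   The other terms of p^<Q>_t are constants and multiples of p_z with z < t.  As q is
   not a root of unity the leading coefficients do not vanish, so the p^<Q>_t arise from
   the algebraically independent e_1, ..., e_k by an invertible triangular substitution. *)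

Set Implicit Arguments.
Unset Strict Implicit.
Unset Printing Implicit Defensive.
Import GRing.Theory.
Local Open Scope ring_scope.

Lemma mcoeff_sum_bmultinom (R : nzRingType) (n b : nat) (P : pred 'X_{1..n})
    (E : 'X_{1..n} -> R) (m : 'X_{1..n}) :
  (\sum_(a : 'X_{1..n < b} | P a) E a *: 'X_[a])@_m =
    if (mdeg m < b)%N && P m then E m else 0.
Proof.
rewrite raddf_sum /=; under eq_bigr do rewrite mcoeffZ mcoeffX.
case: ifP => [/andP[lt_mb Pm] | NPm].
  rewrite (bigD1 (BMultinom lt_mb)) //= eqxx mulr1 big1 ?addr0 // => a /andP[_ ne_am].
  by move: ne_am; rewrite -val_eqE /= => /negbTE ->; rewrite mulr0.
apply: big1 => a Pa; case: eqP => [am|_]; last by rewrite mulr0.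
by move: NPm; rewrite -am bmdeg Pa.
Qed.

Lemma mcoeffXM (R : comNzRingType) (n : nat) (a m : 'X_{1..n}) (p : {mpoly R[n]}) :
  ('X_[a] * p)@_m = if (a <= m)%MM then p@_(m - a) else 0.
Proof.
case: ifP => le_am; first by rewrite -{1}(submK le_am) addmC mulrC mcoeffMX.
rewrite {1}(mpolyE p) mulr_sumr raddf_sum /= big1 // => a' _.
rewrite -scalerAr -mpolyXD mcoeffZ mcoeffX.
by case: eqP => [am|]; [move: le_am; rewrite -am lem_addr | rewrite mulr0].
Qed.

Lemma bigA_distr_set (R : comNzSemiRingType) (I : finType) (F : I -> bool -> R) :
  \prod_i (F i true + F i false) = \sum_(A : {set I}) \prod_i F i (i \in A).
Proof.
under eq_bigr do rewrite -big_bool.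
rewrite bigA_distr_bigA (reindex (fun A : {set I} => [ffun i => i \in A])) /=.
  by apply: eq_bigr => A _; apply: eq_bigr => i _; rewrite ffunE.
exists (fun f : {ffun I -> bool} => [set i | f i]) => [A _ | f _].
  by apply/setP => i; rewrite inE ffunE.
by apply/ffunP => i; rewrite ffunE inE.
Qed.

Lemma comp_mpolyA (R : comNzRingType) (n l m : nat) (P : {mpoly R[n]}) (g : n.-tuple {mpoly R[l]})
    (h : l.-tuple {mpoly R[m]}) :
  (P \mPo g) \mPo h = P \mPo [tuple tnth g i \mPo h | i < n].
Proof.
rewrite (comp_mpolyEX P g) (comp_mpolyEX P) raddf_sum; apply: eq_bigr => a _.
rewrite /= comp_mpolyZ !comp_mpolyX rmorph_prod; congr (_ *: _).
by apply: eq_bigr => i _; rewrite rmorphXn tnth_map tnth_ord_tuple.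
Qed.

Section PolyInFirst.
Variables (R : comNzRingType) (n m : nat).
Implicit Types (g : n.-tuple {mpoly R[m]}) (p : {mpoly R[m]}).

Definition trunc_tuple (i : nat) g : n.-tuple {mpoly R[m]} :=
  [tuple if (j < i)%N then tnth g j else 0 | j < n].

Lemma trunc_tupleE i g j : tnth (trunc_tuple i g) j = if (j < i)%N then tnth g j else 0.
Proof. by rewrite tnth_map tnth_ord_tuple. Qed.

Definition poly_in_first g (i : nat) p : Prop :=
  exists H : {mpoly R[n]}, p = H \mPo trunc_tuple i g.

Lemma poly_in_firstC g i c : poly_in_first g i c%:MP.
Proof. by exists c%:MP; rewrite comp_mpolyC. Qed.

Lemma poly_in_first_tnth g i (j : 'I_n) : (j < i)%N -> poly_in_first g i (tnth g j).
Proof. by move=> lt_ji; exists 'X_j; rewrite comp_mpolyXU -tnth_nth trunc_tupleE lt_ji. Qed.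

Lemma poly_in_firstD g i p1 p2 :
  poly_in_first g i p1 -> poly_in_first g i p2 -> poly_in_first g i (p1 + p2).
Proof. by move=> [H1 ->] [H2 ->]; exists (H1 + H2); rewrite raddfD. Qed.

Lemma poly_in_firstN g i p : poly_in_first g i p -> poly_in_first g i (- p).
Proof. by move=> [H ->]; exists (- H); rewrite raddfN. Qed.

Lemma poly_in_firstB g i p1 p2 :
  poly_in_first g i p1 -> poly_in_first g i p2 -> poly_in_first g i (p1 - p2).
Proof. by move=> ? /poly_in_firstN; apply: poly_in_firstD. Qed.

Lemma poly_in_firstM g i p1 p2 :
  poly_in_first g i p1 -> poly_in_first g i p2 -> poly_in_first g i (p1 * p2).
Proof. by move=> [H1 ->] [H2 ->]; exists (H1 * H2); rewrite rmorphM. Qed.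

Lemma poly_in_firstZ g i c p : poly_in_first g i p -> poly_in_first g i (c *: p).
Proof. by move=> [H ->]; exists (c *: H); rewrite comp_mpolyZ. Qed.

Lemma poly_in_first_sum g i (I : Type) (r : seq I) (P : pred I) (F : I -> {mpoly R[m]}) :
  (forall z, P z -> poly_in_first g i (F z)) ->
  poly_in_first g i (\sum_(z <- r | P z) F z).
Proof.
move=> PF; elim/big_rec: _ => [|z p Pz]; first exact: poly_in_firstC 0.
exact/poly_in_firstD/PF.
Qed.

Lemma eq_trunc_tuple i g1 g2 :
  (forall j : 'I_n, (j < i)%N -> tnth g1 j = tnth g2 j) ->
  trunc_tuple i g1 = trunc_tuple i g2.
Proof.
by move=> eqT; apply: eq_from_tnth => j; rewrite !trunc_tupleE; case: ifP => // /eqT.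
Qed.

End PolyInFirst.

Lemma comp_trunc_tuple_X (R : comNzRingType) (n m i : nat) (g : n.-tuple {mpoly R[m]}) :
  [tuple tnth (trunc_tuple i [tuple 'X_j | j < n]) j \mPo g | j < n] = trunc_tuple i g.
Proof.
apply: eq_from_tnth => j; rewrite tnth_map tnth_ord_tuple !trunc_tupleE.
by case: ifP; rewrite ?comp_mpoly0 // tnth_map tnth_ord_tuple comp_mpolyXU -tnth_nth.
Qed.

Section TriangularSubstitution.
Variables (R : fieldType) (n : nat) (b : 'I_n -> R) (H : 'I_n -> {mpoly R[n]}).
Hypothesis b_neq0 : forall i, b i != 0.

Definition tri_subst : n.-tuple {mpoly R[n]} :=
  [tuple b i *: 'X_i + (H i \mPo trunc_tuple i [tuple 'X_j | j < n]) | i < n].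

Lemma comp_tri_subst m (T : n.-tuple {mpoly R[m]}) i :
  tnth tri_subst i \mPo T = b i *: tnth T i + (H i \mPo trunc_tuple i T).
Proof.
rewrite tnth_map tnth_ord_tuple raddfD /= comp_mpolyZ comp_mpolyXU -tnth_nth.
by rewrite comp_mpolyA comp_trunc_tuple_X.
Qed.

(* K is built one entry at a time, by back substitution. *)
Lemma tri_subst_rinv : exists K, forall i, tnth tri_subst i \mPo K = 'X_i.
Proof.
suff /(_ n (leqnn n)) [K KP] : forall t, (t <= n)%N -> exists K,
    forall i : 'I_n, (i < t)%N -> tnth tri_subst i \mPo K = 'X_i.
  by exists K => i; apply: KP.
elim=> [|t IH] lt_tn; first by exists [tuple 'X_i | i < n].
have [K KP] := IH (ltnW lt_tn); pose t' : 'I_n := Ordinal lt_tn.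
pose K' := [tuple if j == t' then (b t')^-1 *: ('X_t' - (H t' \mPo trunc_tuple t' K))
                  else tnth K j | j < n].
have K'E (i : 'I_n) : (i <= t)%N -> trunc_tuple i K' = trunc_tuple i K.
  move=> le_it; apply: eq_trunc_tuple => j lt_ji; rewrite tnth_map tnth_ord_tuple.
  by case: eqP => // jt; move: lt_ji; rewrite jt ltnNge le_it.
exists K' => i; rewrite ltnS leq_eqVlt => /orP[/eqP it | lt_it].
  have -> : i = t' by apply: val_inj.
  rewrite comp_tri_subst K'E // tnth_map tnth_ord_tuple eqxx.
  by rewrite scalerA mulfV ?b_neq0 // scale1r subrK.
rewrite comp_tri_subst K'E ?(ltnW lt_it) // tnth_map tnth_ord_tuple.
by case: eqP => [it|_]; [move: lt_it; rewrite it ltnn | rewrite -comp_tri_subst KP].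
Qed.

Lemma tri_subst_inj (P : {mpoly R[n]}) : P \mPo tri_subst = 0 -> P = 0.
Proof.
have [K KP] := tri_subst_rinv => P0.
have -> : P = P \mPo [tuple tnth tri_subst i \mPo K | i < n].
  by rewrite -[LHS]comp_mpoly_id; congr (P \mPo _); apply: eq_mktuple => i; rewrite KP.
by rewrite -comp_mpolyA P0 comp_mpoly0.
Qed.

End TriangularSubstitution.

Lemma alg_indep_triangular (R : fieldType) (n m : nat) (g f : n.-tuple {mpoly R[m]})
    (b : 'I_n -> R) :
  (forall P : {mpoly R[n]}, P \mPo g = 0 -> P = 0) ->
  (forall i, b i != 0) ->
  (forall i : 'I_n, poly_in_first g i (tnth f i - b i *: tnth g i)) ->
  forall P : {mpoly R[n]}, P \mPo f = 0 -> P = 0.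
Proof.
move=> g_indep b_neq0 /fin_all_exists[H fE] P Pf0.
have f_tri : f = [tuple tnth (tri_subst b H) i \mPo g | i < n].
  by apply: eq_from_tnth => i; rewrite tnth_map tnth_ord_tuple comp_tri_subst -fE addrC subrK.
by move: Pf0; rewrite f_tri -comp_mpolyA => /g_indep; apply: tri_subst_inj.
Qed.

Section WeightedCompleteSymmetric.
Variables (R : comNzRingType) (k : nat).
Implicit Types (s : R) (m : 'X_{1..k}).
Local Notation E := [tuple mesym k R i.+1 | i < k].

Definition mlength m : nat := \sum_i (m i != 0%N).

Definition hsymw s (t : nat) : {mpoly R[k]} :=
  \sum_(a : 'X_{1..k < t.+1} | mdeg a == t) s ^+ mlength a *: 'X_[a].

Lemma mcoeff_hsymw s t m : (hsymw s t)@_m = (mdeg m == t)%:R * s ^+ mlength m.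
Proof.
rewrite /hsymw (mcoeff_sum_bmultinom t.+1 (fun a => mdeg a == t) (fun a => s ^+ mlength a)).
by case: eqP => [->|_]; rewrite ?ltnSn ?mul1r // andbF mul0r.
Qed.

Lemma hsymw0 s : hsymw s 0 = 1.
Proof.
apply/mpolyP => m; rewrite mcoeff_hsymw mcoeff1 mdeg_eq0.
have [-> | _] := eqVneq m 0%MM; last by rewrite mul0r.
by rewrite /mlength big1 ?mul1r // => i _; rewrite mnm0E.
Qed.

Lemma mcoeff_mesym1_hsymw (h : {set 'I_k}) s t m : (#|h| <= t)%N ->
  ('X_[mesym1 h] * hsymw s (t - #|h|))@_m =
    (mdeg m == t)%:R * (if (mesym1 h <= m)%MM then s ^+ mlength (m - mesym1 h) else 0).
Proof.
move=> le_ht; rewrite mcoeffXM; case: ifP => [le_hm|]; last by rewrite mulr0.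
have -> : mdeg m = (mdeg (m - mesym1 h) + #|h|)%N by rewrite -mdeg_mesym1 -mdegD submK.
by rewrite mcoeff_hsymw -(eqn_add2r #|h|) subnK.
Qed.

(* The summand factors over the coordinates i, so the sum over h is a product over i
   of the sums of the two choices i \in h, i \notin h. *)
Lemma sum_sets_mesym1 s m :
  \sum_(h : {set 'I_k})
     (-1) ^+ #|h| * (if (mesym1 h <= m)%MM then s ^+ mlength (m - mesym1 h) else 0)
  = [forall i, m i <= 1]%N%:R * (s - 1) ^+ mdeg m.
Proof.
pose w (a : nat) (b : bool) := if (b <= a)%N then (-1) ^+ b * s ^+ (a - b != 0)%N else 0.
have wE (h : {set 'I_k}) :
    (-1) ^+ #|h| * (if (mesym1 h <= m)%MM then s ^+ mlength (m - mesym1 h) else 0)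
    = \prod_i w (m i) (i \in h).
  have mesym1E i : mesym1 h i = (i \in h) by rewrite mnmE.
  case: (boolP (mesym1 h <= m)%MM) => [/mnm_lepP le_hm | not_le_hm].
    rewrite (eq_bigr (fun i => (-1) ^+ (i \in h) * s ^+ (m i - (i \in h) != 0)%N)); last first.
      by move=> i _; rewrite /w -mesym1E le_hm.
    rewrite big_split /= !prodrXr -sum1_card big_mkcond /mlength.
    by congr (_ ^+ _ * _ ^+ _); apply: eq_bigr => i _; rewrite ?mnmBE mesym1E; case: (i \in h).
  have [i lt_mi] : exists i, (m i < mesym1 h i)%N.
    apply/existsP; apply: contraR not_le_hm => /existsPn le_hm.
    by apply/mnm_lepP => i; rewrite leqNgt le_hm.
  by rewrite mulr0 (bigD1 i) //= /w -mesym1E leqNgt lt_mi mul0r.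
under eq_bigr do rewrite wE.
rewrite -(bigA_distr_set (fun i => w (m i))).
have wS a : w a true + w a false = (a <= 1)%N%:R * (s - 1) ^+ a.
  by case: a => [|[|a]]; rewrite /w /= ?expr0 ?expr1 ?mulr1 ?mul1r ?add0r ?mulN1r ?mul0r
                                   ?addNr // addrC.
under eq_bigr do rewrite wS.
rewrite big_split /= prodrXr -mdegE; congr (_ * _).
case: (boolP [forall i, m i <= 1]%N) => [/forallP le1 | /forallPn[i gt1]].
  by rewrite big1 // => i _; rewrite le1.
by rewrite (bigD1 i) //= (negbTE gt1) mul0r.
Qed.

Lemma sum_mesym_hsymw s t :
  \sum_(j < t.+1) (-1) ^+ j *: (mesym k R j * hsymw s (t - j)) = (s - 1) ^+ t *: mesym k R t.
Proof.
have -> : \sum_(j < t.+1) (-1) ^+ j *: (mesym k R j * hsymw s (t - j)) =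
    \sum_(h : {set 'I_k} | (#|h| < t.+1)%N) (-1) ^+ #|h| *: ('X_[mesym1 h] * hsymw s (t - #|h|)).
  rewrite [RHS](partition_big (fun h : {set 'I_k} => inord #|h| : 'I_t.+1) xpredT) //=.
  apply: eq_bigr => j _; rewrite mesymE mulr_suml scaler_sumr.
  apply: eq_big => [h | h /eqP <-] //.
  case: ltnP => [lt_ht | le_th]; first by rewrite -val_eqE /= inordK.
  rewrite andFb; apply/negbTE; apply: contraTneq le_th => ->.
  by rewrite -leqNgt -ltnS ltn_ord.
apply/mpolyP => m; rewrite raddf_sum /= mcoeffZ mcoeff_mesym /mechar.
under eq_bigr => h le_ht do rewrite mcoeffZ mcoeff_mesym1_hsymw // mulrCA.
have [dm | ne_dm] := eqVneq (mdeg m) t; last first.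
  by rewrite -mulr_sumr /= mulr0n mul0r mulr0.
rewrite -mulr_sumr /= mulr1n mul1r -dm mulrC -sum_sets_mesym1 [LHS]big_mkcond /=.
apply: eq_bigr => h _; case: ltnP => // lt_mh.
case: ifP => [le_hm | _]; last by rewrite mulr0.
by move: lt_mh; rewrite -{1}(submK le_hm) mdegD mdeg_mesym1 ltnNge leq_addl.
Qed.

Definition hsymw_lead s t : R := (s - 1) ^+ t - (-1) ^+ t.

Lemma hsymw_rec s t :
  hsymw s t.+1 = hsymw_lead s t.+1 *: mesym k R t.+1
                   - \sum_(j < t) (-1) ^+ j.+1 *: (mesym k R j.+1 * hsymw s (t - j)).
Proof.
have := sum_mesym_hsymw s t.+1.
rewrite big_ord_recl big_ord_recr /= subnn hsymw0 mesym0E expr0 !scale1r mul1r mulr1 subn0.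
by move=> /(canRL (addrK _)) ->; rewrite scalerBl opprD addrA addrAC.
Qed.

Lemma poly_in_first_mesym i j : (j <= i)%N -> poly_in_first E i (mesym k R j).
Proof.
case: j => [_|j le_ji]; first by rewrite mesym0E -mpolyC1; apply: poly_in_firstC.
have [lt_jk | le_kj] := ltnP j k; last by rewrite mesym_geqnE // -mpolyC0; apply: poly_in_firstC.
have := poly_in_first_tnth E (j := Ordinal lt_jk) le_ji.
by rewrite tnth_map tnth_ord_tuple.
Qed.

Lemma poly_in_first_hsymw s i t : (t <= i)%N -> poly_in_first E i (hsymw s t).
Proof.
elim/ltn_ind: t => -[_ _|t IH le_ti]; first by rewrite hsymw0 -mpolyC1; apply: poly_in_firstC.
rewrite hsymw_rec; apply: poly_in_firstB; first exact/poly_in_firstZ/poly_in_first_mesym.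
apply: poly_in_first_sum => j _; apply/poly_in_firstZ/poly_in_firstM.
  by apply: poly_in_first_mesym; apply: leq_trans le_ti; rewrite ltnS ltnW.
by apply: IH; [rewrite ltnS leq_subr | rewrite (leq_trans (leq_subr _ _)) // ltnW].
Qed.

Lemma poly_in_first_hsymw_lead s i :
  poly_in_first E i
    (hsymw s i.+1 - hsymw_lead s i.+1 *: mesym k R i.+1).
Proof.
rewrite hsymw_rec addrAC subrr add0r; apply/poly_in_firstN/poly_in_first_sum => j _.
apply/poly_in_firstZ/poly_in_firstM; first exact: poly_in_first_mesym.
by apply: poly_in_first_hsymw; rewrite leq_subr.
Qed.

End WeightedCompleteSymmetric.

Lemma sumn_filter_neq0 (s : seq nat) : sumn [seq n <- s | n != 0%N] = sumn s.
Proof. by elim: s => //= n s IH; case: eqP => [->|_] /=; rewrite IH. Qed.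

Section Partitions.
Variable k : nat.
Implicit Types (a : 'X_{1..k}).

Lemma sumn_lam_of a : sumn (lam_of a) = mdeg a.
Proof.
rewrite /lam_of (perm_sumn (permEl (perm_sort _ _))) sumn_filter_neq0 mdegE sumnE.
by rewrite big_map big_enum.
Qed.

Lemma size_lam_of a : size (lam_of a) = mlength a.
Proof.
by rewrite /lam_of size_sort size_filter count_map -sumn_count /mlength sumnE !big_map.
Qed.

Lemma is_partition_lam_of t a : is_partition k t (lam_of a) = (mdeg a == t).
Proof.
rewrite /is_partition sumn_lam_of sort_sorted /=; last by move=> x y; apply: leq_total.
rewrite /lam_of (perm_all _ (permEl (perm_sort _ _))) all_filter size_sort size_filter.
rewrite (leq_trans (count_size _ _)); last by rewrite size_map size_enum_ord.
have -> : all [pred n | (n != 0%N) ==> (0 < n)%N] [seq a i | i <- enum 'I_k].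
  by apply/allP => n _; rewrite /= lt0n implybb.
by rewrite andbT.
Qed.

Lemma mcoeff_msym lam a :
  (Defs.msym k lam)@_a = ((mdeg a < (sumn lam).+1)%N && (lam_of a == lam))%:R.
Proof.
rewrite /Defs.msym (eq_bigr (fun b => 1 *: 'X_[val b])) => [|b _]; last by rewrite scale1r.
by rewrite (mcoeff_sum_bmultinom (sumn lam).+1 (fun b => lam_of b == lam) (fun=> 1)); case: ifP.
Qed.

Lemma mcoeff_pt q t a :
  (pt q k t)@_a = (mdeg a == t)%:R * (q ^- mlength a * (q - q^-1) ^+ (mlength a).-1).
Proof.
pose F (lam : seq nat) := q ^- size lam * (q - q^-1) ^+ (size lam).-1.
rewrite /pt raddf_sum
  (eq_big_seq (fun lam => (lam_of a == lam)%:R * ((mdeg a == t)%:R * F lam))).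
  have [dat | _] := eqVneq (mdeg a) t; last first.
    by rewrite big1 ?mul0r // => lam _; rewrite !mul0r mulr0.
  have part_a : lam_of a \in partitions k t.
    have lt_at : (mdeg a < t.+1)%N by rewrite dat.
    rewrite mem_filter is_partition_lam_of dat eqxx mem_undup.
    by apply/mapP; exists (BMultinom lt_at); rewrite ?mem_enum.
  rewrite (bigD1_seq _ part_a) ?filter_uniq ?undup_uniq //= eqxx mul1r big1 ?addr0.
    by rewrite /F size_lam_of.
  by move=> lam /negbTE; rewrite eq_sym => ->; rewrite mul0r.
move=> lam; rewrite mem_filter => /andP[/and4P[_ _ /eqP sum_lam _] _].
rewrite /= mcoeffZ mcoeff_msym sum_lam mulrA -natrM mulnb [RHS]mulrC; congr (_ * _%:R).
have [eq_lam | _] := eqVneq (lam_of a) lam; last by rewrite andbF.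
by rewrite -sum_lam -eq_lam sumn_lam_of eqxx ltnSn.
Qed.

End Partitions.

Lemma subr_invr_neq0 (F : fieldType) (q : F) :
  q != 0 -> ~~ 2.-unity_root q -> q - q^-1 != 0.
Proof.
move=> q0; apply: contra; rewrite subr_eq0 unity_rootE expr2 => /eqP qV.
by rewrite {2}qV mulfV.
Qed.

Lemma hsymw_lead_neq0 (F : fieldType) (q : F) t :
  ~~ (2 * t).-unity_root q -> hsymw_lead (1 - q ^- 2) t != 0.
Proof.
move=> no_root; rewrite /hsymw_lead addrAC subrr add0r (exprNn (q ^- 2)).
rewrite -[X in _ - X]mulr1 -mulrBr mulf_neq0 ?signr_eq0 // subr_eq0 -exprVn -exprM.
by rewrite exprVn invr_eq1 -unity_rootE.
Qed.

Lemma pt_hsymw q k t : q - q^-1 != 0 -> (0 < t)%N ->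
  pt q k t = (q - q^-1)^-1 *: hsymw k (1 - q ^- 2) t.
Proof.
move=> d0 t_gt0; have q0 : q != 0 by apply: contraNneq d0 => ->; rewrite invr0 subr0.
apply/mpolyP => a; rewrite mcoeffZ mcoeff_pt mcoeff_hsymw.
have [dat | _] := eqVneq (mdeg a) t; last by rewrite !mul0r mulr0.
have : (0 < mlength a)%N.
  rewrite -size_lam_of lt0n size_eq0; apply: contraTneq t_gt0 => la0.
  by rewrite -dat -sumn_lam_of la0.
case: (mlength a) => // l _; rewrite !mul1r /=.
have -> : 1 - q ^- 2 = (q - q^-1) * q^-1 by rewrite mulrBl mulfV // expr2 invfM.
by rewrite exprMn [(q - q^-1) ^+ l.+1]exprS mulrA mulKf // exprVn mulrC.
Qed.

Lemma poly_in_first_pQ q beta Q k i : q - q^-1 != 0 ->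
  poly_in_first [tuple mesym k C j.+1 | j < k] i
    (pQ q beta Q k i.+1
     - ((q - q^-1)^-1 * hsymw_lead (1 - q ^- 2) i.+1) *: mesym k C i.+1).
Proof.
move=> d0; rewrite /pQ pt_hsymw // addrAC (addrAC (_ *: _)) -scalerA -scalerBr.
apply: poly_in_firstD; first apply: poly_in_firstD.
- exact/poly_in_firstZ/poly_in_first_hsymw_lead.
- exact: poly_in_firstC.
apply/poly_in_firstZ; rewrite big_seq; apply: poly_in_first_sum => z.
rewrite mem_index_iota => /andP[z_gt0 lt_zi].
by rewrite pt_hsymw //; apply/poly_in_firstZ/poly_in_firstZ/poly_in_first_hsymw.
Qed.

Theorem mainTheorem19 (q Q beta : C) (k : nat) :
  q != 0 -> (forall n : nat, (0 < n)%N -> ~~ n.-unity_root q) ->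
  (0 < k)%N -> Q != 0 -> beta != 0 ->
  alg_indep [tuple pQ q beta Q k i.+1 | i < k].
Proof.
move=> q0 no_root _ _ _.
have d0 : q - q^-1 != 0 by apply: subr_invr_neq0; last exact: no_root.
apply: (alg_indep_triangular (g := [tuple mesym k C i.+1 | i < k])
          (b := fun i : 'I_k => (q - q^-1)^-1 * hsymw_lead (1 - q ^- 2) i.+1)).
- exact: msym_fundamental_un0.
- by move=> i; rewrite mulf_neq0 ?invr_eq0 // hsymw_lead_neq0 // no_root.
- by move=> i; rewrite !tnth_map !tnth_ord_tuple; apply: poly_in_first_pQ.
Qed.
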